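(* Assume $a>0$. For $r\in(0,1]$ and $t>0$ let $x_{\rm L}(r,t,a)$ denote the left edge of the support of the three-parametric MP density $\rho(\cdot;r,t,a)$, namely the middle real root of the cubic \[ S(x;r,t,a)=4ax^3-\{8a^2+4a(3r+2)t-t^2\}x^2+2\big[2a^3-2a^2(5r-2)t+a\{r(6r-1)+1\}t^2-(r+1)t^3\big]x+(r-1)^2t^2\{a^2-a(4r-2)t+t^2\}. \] (i) The time-evolution of the support touches the origin $x=0$ (i.e. $x_{\rm L}(r,t,a)=0$ for some $t>0$) if and only if $r=1$; for $r\in(0,1)$ one has $x_{\rm L}(r,t,a)>0$. (ii) When $r=1$, with the critical time $t_{\rm c}(a):=a$, one has $x_{\rm L}(1,t,a)>0$ for $0\le t<t_{\rm c}(a)$ and $x_{\rm L}(1,t,a)=0$ for all $t\ge t_{\rm c}(a)$. Moreover \[ x_{\rm L}(1,t,a)\simeq\frac{4}{27a^2}(t_{\rm c}(a)-t)^{3}\quad\text{as } t\nearrow t_{\rm c}(a). \]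
   Context: The three-parametric MP density $\rho(x;r,t,a)$ ($r\in(0,1]$, $t>0$, $a\ge0$) is the density of the weak limit, as $N,M\to\infty$ with $N/M\to r$, of $\frac1N\sum_{j}\delta_{X^N_j(t)/M}$, where $X^N_j$ solve $dX^N_j=2\sqrt{X^N_j}dB_j+2(M-N+1)dt+4X^N_j\sum_{k\neq j}\frac{dt}{X^N_j-X^N_k}$ with independent standard Brownian motions $B_j$ and $X^N_j(0)=aM$; equivalently its Stieltjes transform $G$ solves $z=\frac1G+\frac{t}{1-rtG}+\frac{a}{(1-rtG)^2}$. Its support is $[x_{\rm L}(r,t,a),x_{\rm R}(r,t,a)]$ where $x_{\rm L}\le x_{\rm R}$ are the two largest of the three real roots of $S(\cdot;r,t,a)$. The notation $f\simeq g$ means $f/g\to1$. *)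

From Stdlib Require Import Reals ClassicalEpsilon.
From Coquelicot Require Import Coquelicot.
Open Scope R_scope.

Definition S (x r t a : R) : R :=
  4 * a * x ^ 3
  - (8 * a ^ 2 + 4 * a * (3 * r + 2) * t - t ^ 2) * x ^ 2
  + 2 * (2 * a ^ 3 - 2 * a ^ 2 * (5 * r - 2) * t
         + a * (r * (6 * r - 1) + 1) * t ^ 2 - (r + 1) * t ^ 3) * x
  + (r - 1) ^ 2 * t ^ 2 * (a ^ 2 - a * (4 * r - 2) * t + t ^ 2).

Definition is_middle_root (r t a x : R) : Prop :=
  exists y1 y3 : R, y1 <= x <= y3 /\
    forall y : R, S y r t a = 4 * a * (y - y1) * (y - x) * (y - y3).

(* x_L(r,t,a): the middle real root of S (chosen by classical choice; it is
   unique whenever it exists). *)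
Definition xL (r t a : R) : R :=
  epsilon (inhabits 0) (is_middle_root r t a).

(* For r < 1 the cubic S is positive at 0 and negative at a + (1 + r) t, so
   its middle root lies strictly between them.  For r = 1 the constant term
   vanishes and S(x) = x (4 a x^2 - beta x + 4 (a - t)^3): the two other roots
   have product (a - t)^3 / a and positive sum, so 0 is the middle root exactly
   when t >= a.  For t < a the middle root is the smaller root
   8 (a - t)^3 / (beta + sqrt delta), and beta + sqrt delta -> 54 a^2 as t -> a
   gives the cubic vanishing rate. *)
From Stdlib Require Import Reals Lra Psatz ClassicalEpsilon.
From Coquelicot Require Import Coquelicot.
Open Scope R_scope.

Lemma Rmult3_integral (u v w : R) : u * v * w = 0 -> u = 0 \/ v = 0 \/ w = 0.
Proof.
  intros h. destruct (Rmult_integral _ _ h) as [huv | hw]; [|tauto].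
  destruct (Rmult_integral _ _ huv); tauto.
Qed.

Lemma middle_root_unique (c y1 x y3 z1 x' z3 : R) : c <> 0 ->
  y1 <= x <= y3 -> z1 <= x' <= z3 ->
  (forall y, c * (y - y1) * (y - x) * (y - y3) = c * (y - z1) * (y - x') * (y - z3)) ->
  x = x'.
Proof.
  intros hc hx hx' H.
  (* p(1) + p(-1) - 2 p(0) = -2 c (sum of the roots) *)
  assert (Hsum : y1 + x + y3 = z1 + x' + z3).
  { pose proof (H 0); pose proof (H 1); pose proof (H (-1)).
    apply (Rmult_eq_reg_l c); [nra | exact hc]. }
  assert (Hx : (x - z1) * (x - x') * (x - z3) = 0).
  { apply (Rmult_eq_reg_l c); [|exact hc]. rewrite <- !Rmult_assoc, <- H. ring. }
  assert (Hx' : (x' - y1) * (x' - x) * (x' - y3) = 0).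
  { apply (Rmult_eq_reg_l c); [|exact hc]. rewrite <- !Rmult_assoc, H. ring. }
  destruct (Rmult3_integral _ _ _ Hx) as [? | [? | ?]];
    destruct (Rmult3_integral _ _ _ Hx') as [? | [? | ?]]; lra.
Qed.

Lemma xL_eq (r t a x : R) : 0 < a -> is_middle_root r t a x -> xL r t a = x.
Proof.
  intros ha Hx.
  pose proof (epsilon_spec (inhabits 0) (is_middle_root r t a) (ex_intro _ x Hx)) as He.
  fold (xL r t a) in He.
  destruct Hx as (y1 & y3 & Hord & Hfac), He as (z1 & z3 & Hord' & Hfac').
  symmetry. apply (middle_root_unique (4 * a) y1 x y3 z1 (xL r t a) z3);
    [lra | exact Hord | exact Hord' |].
  intro y. now rewrite <- Hfac, <- Hfac'.
Qed.

Lemma quadratic_roots_around (c b d u p : R) : 0 < c -> u <= p ->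
  c * u ^ 2 + b * u + d < 0 -> c * p ^ 2 + b * p + d < 0 ->
  exists y1 y3, y1 < u /\ p < y3 /\
    forall y, c * y ^ 2 + b * y + d = c * (y - y1) * (y - y3).
Proof.
  intros hc hup hu hp.
  set (D := b ^ 2 - 4 * c * d).
  assert (hD : 0 < D).
  { assert (E : 4 * c * (c * u ^ 2 + b * u + d) = (2 * c * u + b) ^ 2 - D)
      by (unfold D; ring).
    pose proof (pow2_ge_0 (2 * c * u + b)). nra. }
  pose proof (sqrt_sqrt D (Rlt_le _ _ hD)) as hs.
  pose proof (sqrt_lt_R0 D hD) as hs0.
  set (s := sqrt D) in *.
  assert (Hfac : forall y, c * y ^ 2 + b * y + d
                   = c * (y - (- b - s) / (2 * c)) * (y - (- b + s) / (2 * c))).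
  { intro y. replace d with ((b ^ 2 - s * s) / (4 * c)) by (rewrite hs; unfold D; field; lra).
    field. lra. }
  assert (h13 : (- b - s) / (2 * c) < (- b + s) / (2 * c)).
  { apply Rmult_lt_compat_r; [apply Rinv_0_lt_compat |]; lra. }
  exists ((- b - s) / (2 * c)), ((- b + s) / (2 * c)).
  rewrite Hfac in hu, hp.
  set (y1 := (- b - s) / (2 * c)) in *. set (y3 := (- b + s) / (2 * c)) in *.
  clearbody y1 y3.
  split; [| split; [| exact Hfac]].
  - destruct (Rlt_or_le y1 u) as [h | h]; [exact h |].
    assert (0 <= (y1 - u) * (y3 - u)) by (apply Rmult_le_pos; lra). nra.
  - destruct (Rlt_or_le p y3) as [h | h]; [exact h |].
    assert (0 <= (p - y1) * (p - y3)) by (apply Rmult_le_pos; lra). nra.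
Qed.

Lemma cubic_middle_root_of_sign_change (c3 c2 c1 c0 u z p : R) :
  0 < c3 -> u < z < p ->
  0 < c3 * u ^ 3 + c2 * u ^ 2 + c1 * u + c0 ->
  c3 * z ^ 3 + c2 * z ^ 2 + c1 * z + c0 = 0 ->
  c3 * p ^ 3 + c2 * p ^ 2 + c1 * p + c0 < 0 ->
  exists y1 y3, y1 <= z <= y3 /\
    forall y, c3 * y ^ 3 + c2 * y ^ 2 + c1 * y + c0 = c3 * (y - y1) * (y - z) * (y - y3).
Proof.
  intros hc [huz hzp] hu hz hp.
  set (b := c3 * z + c2). set (d := c3 * z ^ 2 + c2 * z + c1).
  assert (Hdiv : forall y, c3 * y ^ 3 + c2 * y ^ 2 + c1 * y + c0
                   = (y - z) * (c3 * y ^ 2 + b * y + d)).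
  { intro y. unfold b, d. replace c0 with (- (c3 * z ^ 3 + c2 * z ^ 2 + c1 * z)) by lra.
    ring. }
  rewrite Hdiv in hu, hp.
  destruct (quadratic_roots_around c3 b d u p hc ltac:(lra) ltac:(nra) ltac:(nra))
    as (y1 & y3 & h1 & h3 & Hq).
  exists y1, y3. split; [lra |].
  intro y. rewrite Hdiv, Hq. ring.
Qed.

Lemma S_expand (y r t a : R) : S y r t a =
  (4 * a) * y ^ 3 + (- (8 * a ^ 2 + 4 * a * (3 * r + 2) * t - t ^ 2)) * y ^ 2
  + (2 * (2 * a ^ 3 - 2 * a ^ 2 * (5 * r - 2) * t
          + a * (r * (6 * r - 1) + 1) * t ^ 2 - (r + 1) * t ^ 3)) * y
  + (r - 1) ^ 2 * t ^ 2 * (a ^ 2 - a * (4 * r - 2) * t + t ^ 2).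
Proof. unfold S. ring. Qed.

Lemma S_continuous (r t a : R) : continuity (fun y => S y r t a).
Proof. unfold S. reg. Qed.

Lemma S_at_0_pos (r t a : R) : 0 < r < 1 -> 0 < t -> 0 < a -> 0 < S 0 r t a.
Proof.
  intros hr ht ha.
  replace (S 0 r t a) with
    ((1 - r) ^ 2 * t ^ 2 * ((t - a * (2 * r - 1)) ^ 2 + 4 * a ^ 2 * (r * (1 - r))))
    by (unfold S; ring).
  pose proof (pow2_ge_0 (t - a * (2 * r - 1))).
  assert (0 < r * (1 - r)) by nra.
  assert (0 < a ^ 2) by nra.
  apply Rmult_lt_0_compat; [apply Rmult_lt_0_compat; apply pow_lt |]; nra.
Qed.

Lemma S_at_a_plus_neg (r t a : R) : 0 < r -> 0 < t -> 0 < a ->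
  S (a + (1 + r) * t) r t a < 0.
Proof.
  intros hr ht ha.
  replace (S (a + (1 + r) * t) r t a)
    with (- (4 * r * t * (2 * a + t) ^ 3 + 27 * r ^ 2 * t ^ 2 * a ^ 2))
    by (unfold S; ring).
  assert (0 < (2 * a + t) ^ 3) by (apply pow_lt; lra).
  assert (0 < r * t) by nra.
  assert (0 < (r * t * a) ^ 2) by (apply pow_lt; nra).
  nra.
Qed.

Lemma middle_root_pos (r t a : R) : 0 < r < 1 -> 0 < t -> 0 < a ->
  exists z, 0 < z /\ is_middle_root r t a z.
Proof.
  intros hr ht ha.
  set (p := a + (1 + r) * t).
  assert (hp : 0 < p) by (unfold p; nra).
  pose proof (S_at_0_pos r t a hr ht ha) as S0.
  pose proof (S_at_a_plus_neg r t a ltac:(lra) ht ha) as Sp. fold p in Sp.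
  destruct (IVT (fun y => - S y r t a) 0 p) as (z & [hz0 hzp] & Hz);
    [apply continuity_opp, S_continuous | exact hp | lra | lra |].
  assert (Sz : S z r t a = 0) by lra.
  assert (hz0' : 0 < z) by (destruct hz0 as [? | <-]; lra).
  assert (hzp' : z < p) by (destruct hzp as [? | ->]; lra).
  rewrite !S_expand in S0, Sp, Sz.
  assert (h4a : 0 < 4 * a) by lra.
  destruct (cubic_middle_root_of_sign_change _ _ _ _ 0 z p h4a (conj hz0' hzp') S0 Sz Sp)
    as (y1 & y3 & Hord & Hfac).
  exists z. split; [exact hz0' |]. exists y1, y3. split; [exact Hord |].
  intro y. rewrite S_expand. apply Hfac.
Qed.

Definition beta (t a : R) : R := 8 * a ^ 2 + 20 * a * t - t ^ 2.

(* The discriminant of 4 a x^2 - beta x + 4 (a - t)^3, see [delta_eq]. *)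
Definition delta (t a : R) : R := t * (t + 8 * a) ^ 3.

Definition rho (t a : R) : R := beta t a + sqrt (delta t a).

Definition x_lo (t a : R) : R := 8 * (a - t) ^ 3 / rho t a.

Definition x_hi (t a : R) : R := rho t a / (8 * a).

Lemma delta_eq (t a : R) : delta t a = beta t a ^ 2 - 64 * a * (a - t) ^ 3.
Proof. unfold delta, beta. ring. Qed.

Lemma delta_nonneg (t a : R) : 0 < a -> 0 <= t -> 0 <= delta t a.
Proof. intros ha ht. unfold delta. apply Rmult_le_pos; [lra | apply pow_le; lra]. Qed.

Lemma rho_pos (t a : R) : 0 < a -> 0 <= t -> 0 < rho t a.
Proof.
  intros ha ht. unfold rho.
  destruct (Rlt_or_le 0 (beta t a)) as [hb | hb].
  - pose proof (sqrt_pos (delta t a)). lra.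
  - (* beta <= 0 forces t > a, hence delta > beta^2 *)
    assert (hta : a < t) by (unfold beta in hb; nra).
    assert (hd : beta t a ^ 2 < delta t a).
    { rewrite delta_eq. assert (0 < (t - a) ^ 3) by (apply pow_lt; lra). nra. }
    pose proof (sqrt_sqrt _ (delta_nonneg t a ha ht)).
    pose proof (sqrt_pos (delta t a)).
    nra.
Qed.

Lemma S_1_eq (y t a : R) :
  S y 1 t a = y * (4 * a * y ^ 2 - beta t a * y + 4 * (a - t) ^ 3).
Proof. unfold S, beta. ring. Qed.

Lemma x_lo_eq (t a : R) : 0 < a -> 0 <= t ->
  x_lo t a = (beta t a - sqrt (delta t a)) / (8 * a).
Proof.
  intros ha ht.
  pose proof (sqrt_sqrt _ (delta_nonneg t a ha ht)) as hs.
  pose proof (rho_pos t a ha ht) as hr.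
  unfold x_lo. unfold rho in *. set (s := sqrt (delta t a)) in *.
  rewrite delta_eq in hs.
  replace ((a - t) ^ 3) with ((beta t a ^ 2 - s * s) / (64 * a)) by (rewrite hs; field; lra).
  field. lra.
Qed.

Lemma S_1_factor (t a : R) : 0 < a -> 0 <= t -> forall y,
  S y 1 t a = 4 * a * (y - 0) * (y - x_lo t a) * (y - x_hi t a).
Proof.
  intros ha ht y.
  pose proof (sqrt_sqrt _ (delta_nonneg t a ha ht)) as hs.
  rewrite S_1_eq, x_lo_eq by lra. unfold x_hi, rho.
  set (s := sqrt (delta t a)) in *. rewrite delta_eq in hs.
  replace ((a - t) ^ 3) with ((beta t a ^ 2 - s * s) / (64 * a)) by (rewrite hs; field; lra).
  field. lra.
Qed.

Lemma x_lo_le_x_hi (t a : R) : 0 < a -> 0 <= t -> x_lo t a <= x_hi t a.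
Proof.
  intros ha ht. rewrite x_lo_eq by lra. unfold x_hi, rho.
  apply Rmult_le_compat_r; [left; apply Rinv_0_lt_compat; lra |].
  pose proof (sqrt_pos (delta t a)). lra.
Qed.

Lemma xL_1_before (t a : R) : 0 < a -> 0 <= t <= a -> xL 1 t a = x_lo t a.
Proof.
  intros ha ht. apply xL_eq; [exact ha |].
  exists 0, (x_hi t a). split; [split |].
  - unfold x_lo. apply Rdiv_le_0_compat; [apply Rmult_le_pos, pow_le |
      apply rho_pos]; lra.
  - apply x_lo_le_x_hi; lra.
  - apply S_1_factor; lra.
Qed.

Lemma xL_1_after (t a : R) : 0 < a -> a <= t -> xL 1 t a = 0.
Proof.
  intros ha ht.
  pose proof (rho_pos t a ha ltac:(lra)) as hr.
  apply xL_eq; [exact ha |].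
  exists (x_lo t a), (x_hi t a). split; [split |].
  - unfold x_lo, Rdiv.
    assert (0 <= (t - a) ^ 3) by (apply pow_le; lra).
    assert (0 < / rho t a) by (apply Rinv_0_lt_compat; lra).
    replace ((a - t) ^ 3) with (- (t - a) ^ 3) by ring. nra.
  - unfold x_hi. apply Rdiv_le_0_compat; lra.
  - intro y. rewrite S_1_factor by lra. ring.
Qed.

Lemma x_lo_pos (t a : R) : 0 < a -> 0 <= t < a -> 0 < x_lo t a.
Proof.
  intros ha ht. unfold x_lo.
  apply Rdiv_lt_0_compat; [apply Rmult_lt_0_compat, pow_lt | apply rho_pos]; lra.
Qed.

Lemma x_lo_ratio (t a : R) : 0 < a -> 0 <= t < a ->
  x_lo t a / (4 / (27 * a ^ 2) * (a - t) ^ 3) = 54 * a ^ 2 / rho t a.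
Proof.
  intros ha ht.
  pose proof (rho_pos t a ha ltac:(lra)).
  assert (0 < (a - t) ^ 3) by (apply pow_lt; lra).
  unfold x_lo. field. repeat split; lra.
Qed.

Lemma rho_at_a (a : R) : 0 < a -> rho a a = 54 * a ^ 2.
Proof.
  intros ha. unfold rho, beta, delta.
  replace (a * (a + 8 * a) ^ 3) with ((27 * a ^ 2) ^ 2) by ring.
  rewrite sqrt_pow2; [ring | nra].
Qed.

Lemma rho_continuous (a x : R) : continuous (fun t => rho t a) x.
Proof.
  unfold rho, beta, delta. apply (continuous_plus (V := R_NormedModule)).
  - apply (ex_derive_continuous (V := R_NormedModule)). auto_derive. exact I.
  - apply continuous_sqrt_comp, (ex_derive_continuous (V := R_NormedModule)).
    auto_derive. exact I.
Qed.

Lemma xL_1_ratio_lim (a : R) : 0 < a ->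
  filterlim (fun t => xL 1 t a / (4 / (27 * a ^ 2) * (a - t) ^ 3))
    (at_left a) (locally 1).
Proof.
  intros ha.
  apply (filterlim_ext_loc (fun t => 54 * a ^ 2 / rho t a)).
  - exists (mkposreal a ha). intros t ht hta.
    change (Rabs (t - a) < a) in ht. apply Rabs_def2 in ht.
    rewrite xL_1_before, x_lo_ratio; lra.
  - apply (filterlim_filter_le_1 (F := locally a)); [apply filter_le_within |].
    replace 1 with (54 * a ^ 2 / rho a a)
      by (rewrite rho_at_a; [field |]; nra).
    apply (continuous_mult (K := R_AbsRing)); [apply continuous_const |].
    apply continuous_Rinv_comp; [apply rho_continuous |].
    rewrite rho_at_a; nra.
Qed.

Theorem proposition1p2 (a : R) (ha : 0 < a) :
  (* (i) *)
  (forall r : R, 0 < r <= 1 ->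
     ((exists t : R, 0 < t /\ xL r t a = 0) <-> r = 1)) /\
  (forall r t : R, 0 < r < 1 -> 0 < t -> 0 < xL r t a) /\
  (* (ii), with t_c(a) = a *)
  (forall t : R, 0 <= t < a -> 0 < xL 1 t a) /\
  (forall t : R, a <= t -> xL 1 t a = 0) /\
  filterlim (fun t => xL 1 t a / (4 / (27 * a ^ 2) * (a - t) ^ 3))
    (at_left a) (locally 1).
Proof.
  assert (Hpos : forall r t, 0 < r < 1 -> 0 < t -> 0 < xL r t a).
  { intros r t hr ht. destruct (middle_root_pos r t a hr ht ha) as (z & hz & Hz).
    now rewrite (xL_eq r t a z ha Hz). }
  split; [| split; [exact Hpos | split; [| split]]].
  - intros r hr. split.
    + intros (t & ht & h0). destruct (Req_dec r 1) as [-> | hr1]; [reflexivity |].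
      enough (0 < xL r t a) by lra. apply Hpos; lra.
    + intros ->. exists a. split; [exact ha | apply xL_1_after; lra].
  - intros t ht. rewrite xL_1_before by lra. now apply x_lo_pos.
  - intros t ht. now apply xL_1_after.
  - now apply xL_1_ratio_lim.
Qed.
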